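(* Let $J\in\mathbb{R}^{n\times m}$, $h\in\mathbb{R}^n$, $g\in\mathbb{R}^m$, and $f(x)=\sum_{j=1}^m\rho(J_j\cdot x+g_j)+h^Tx$ for $x\in\{-1,1\}^n$. Let $I,S\subseteq[n]$ be disjoint, and fix $x_I\in\{-1,1\}^{|I|}$, $x_S\in\{-1,1\}^{|S|}$. Then, with $X$ uniform on $\{-1,1\}^n$, \[\mathbb{E}\big[\mathbb{1}_{X_I=x_I}e^{f(X)}\,\big|\,X_S=x_S\big]=\sum_{q\in\{-1,1\}^m}e^{g\cdot q}\prod_{i\in S}e^{x_i(J^{(i)}\cdot q+h_i)}\prod_{i\in[n]\setminus S}\cosh(J^{(i)}\cdot q+h_i)\prod_{i\in I}\sigma(2x_i(J^{(i)}\cdot q+h_i)).\]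
   Context: $J_j$ denotes the $j$-th column and $J^{(i)}$ the $i$-th row of $J$; $\rho(t)=\log(e^t+e^{-t})$; $\sigma(t)=1/(1+e^{-t})$. *)

From HB Require Import structures.
From mathcomp Require Import all_boot all_order all_algebra.
From mathcomp Require Import all_classical all_reals all_analysis.
Set Implicit Arguments. Unset Strict Implicit. Unset Printing Implicit Defensive.
Import Order.TTheory GRing.Theory Num.Theory.
Local Open Scope ring_scope.

(* Points of {-1,1}^n are encoded as boolean vectors; [spin b] is the sign. *)
Definition spin {R : realType} (b : bool) : R := if b then 1 else -1.

Definition rho {R : realType} (t : R) : R := ln (expR t + expR (- t)).
Definition sigma {R : realType} (t : R) : R := 1 / (1 + expR (- t)).
Definition coshR {R : realType} (t : R) : R := (expR t + expR (- t)) / 2.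

Definition fRBM {R : realType} (n m : nat) (J : 'M[R]_(n, m)) (h : 'I_n -> R)
  (g : 'I_m -> R) (x : {ffun 'I_n -> bool}) : R :=
  \sum_(j < m) rho (\sum_(i < n) J i j * spin (x i) + g j)
  + \sum_(i < n) h i * spin (x i).

Definition field_i {R : realType} (n m : nat) (J : 'M[R]_(n, m)) (h : 'I_n -> R)
  (q : {ffun 'I_m -> bool}) (i : 'I_n) : R :=
  \sum_(j < m) J i j * spin (q j) + h i.

(* Conditional expectation of Y(X), X uniform on {-1,1}^n, given the event P
   (of positive probability): the average of Y over the points satisfying P. *)
Definition cond_exp_unif {R : realType} (n : nat)
  (P : pred {ffun 'I_n -> bool}) (Y : {ffun 'I_n -> bool} -> R) : R :=
  (\sum_(x | P x) Y x) / (#|[pred x | P x]|)%:R.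

From HB Require Import structures.
From mathcomp Require Import all_boot all_order all_algebra.
From mathcomp Require Import all_classical all_reals all_analysis.
From mathcomp Require Import ring.
Import Order.TTheory GRing.Theory Num.Theory.
Local Open Scope ring_scope.

(* Since e^{rho(t)} = sum_{s = +-1} e^{s t}, expanding the product over the
   hidden units writes e^{f(x)} as a sum over q in {-1,1}^m of
   e^{g.q} prod_i e^{x_i (J^(i).q + h_i)}, a product over the visible
   coordinates.  Summing over the x compatible with the clamping then
   factorises coordinatewise, and each visible coordinate contributes
   e^{x_i t} (clamped by S), e^{x_i t}/2 = cosh(t) sigma(2 x_i t)
   (clamped by I), or cosh(t) (free), against 1, 2, 2 points in the count. *)

Lemma sum_ffun_family_prod (R : comPzSemiRingType) (aT rT : finType)
    (C : aT -> pred rT) (F : aT -> rT -> R) :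
  \sum_(f : {ffun aT -> rT} | [forall i, C i (f i)]) \prod_i F i (f i)
  = \prod_i \sum_(b | C i b) F i b.
Proof. by rewrite bigA_distr_big_dep; apply: eq_bigl => f; apply/forallP/familyP. Qed.

Lemma prod_setC_if (R : comPzSemiRingType) (T : finType) (S : {set T})
    (a b : T -> R) :
  \prod_(i in S) a i * \prod_(i in ~: S) b i
  = \prod_i (if i \in S then a i else b i).
Proof.
rewrite big_if /=; congr (_ * _); apply: eq_bigl => i.
by rewrite finset.in_setC.
Qed.

Lemma bilinear_affine_swap (R : comPzRingType) (n m : nat) (J : 'M[R]_(n, m))
    (h : 'I_n -> R) (g : 'I_m -> R) (x : 'I_n -> R) (y : 'I_m -> R) :
  \sum_j y j * (\sum_i J i j * x i + g j) + \sum_i h i * x i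
  = \sum_j g j * y j + \sum_i x i * (\sum_j J i j * y j + h i).
Proof.
have swap : \sum_j y j * \sum_i J i j * x i = \sum_i x i * \sum_j J i j * y j.
  under eq_bigr do rewrite mulr_sumr.
  rewrite exchange_big /=; apply: eq_bigr => i _; rewrite mulr_sumr.
  by apply: eq_bigr => j _; ring.
under eq_bigr do rewrite mulrDr.
under [\sum_i x i * _]eq_bigr do rewrite mulrDr.
rewrite !big_split /= swap.
have -> : \sum_j y j * g j = \sum_j g j * y j by apply: eq_bigr => j _; ring.
have -> : \sum_i x i * h i = \sum_i h i * x i by apply: eq_bigr => i _; ring.
ring.
Qed.

Section SpinSums.
Variable R : realType.

Lemma expR_rho (t : R) : expR (rho t) = expR t + expR (- t).
Proof. by rewrite /rho lnK // posrE addr_gt0 // expR_gt0. Qed.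

Lemma sum_spin_expR (t : R) : \sum_b expR (spin b * t) = expR t + expR (- t).
Proof. by rewrite big_bool /spin /= mul1r mulN1r. Qed.

Lemma coshRN (t : R) : coshR (- t) = coshR t.
Proof. by rewrite /coshR opprK addrC. Qed.

Lemma coshR_sigma2 (t : R) : coshR t * sigma (2 * t) = expR t / 2.
Proof.
have et_neq0 : expR t != 0 by rewrite gt_eqF // expR_gt0.
rewrite /coshR /sigma.
have -> : - (2 * t) = - t + - t by ring.
rewrite !expRD !expRN.
by field; rewrite et_neq0 /= gt_eqF // addr_gt0 // mulr_gt0 // expR_gt0.
Qed.

Lemma coshR_sigma_spin (s : bool) (t : R) :
  coshR t * sigma (2 * spin s * t) = expR (spin s * t) / 2.
Proof.
case: s; rewrite /spin ?mulr1 ?mul1r ?mulN1r -coshR_sigma2 ?coshRN //.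
by rewrite mulrN1 mulNr mulrN.
Qed.

End SpinSums.

Lemma expR_fRBM (R : realType) (n m : nat) (J : 'M[R]_(n, m)) (h : 'I_n -> R)
    (g : 'I_m -> R) (x : {ffun 'I_n -> bool}) :
  expR (fRBM J h g x)
  = \sum_(q : {ffun 'I_m -> bool}) expR (\sum_j g j * spin (q j))
      * \prod_i expR (spin (x i) * field_i J h q i).
Proof.
rewrite /fRBM expRD expR_sum.
under eq_bigr do rewrite expR_rho -sum_spin_expR.
rewrite bigA_distr_bigA /= mulr_suml; apply: eq_bigr => q _.
by rewrite -!expR_sum -!expRD bilinear_affine_swap.
Qed.

Section Clamping.
Variables (R : realType) (n : nat).
Implicit Types (I S : {set 'I_n}) (xI xS : {ffun 'I_n -> bool}).

Definition clamped S xS (i : 'I_n) (b : bool) : bool := (i \in S) ==> (b == xS i).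

Lemma card_clamped S xS :
  (#|[pred x : {ffun 'I_n -> bool} | [forall i in S, x i == xS i]]|)%:R
  = \prod_i \sum_(b | clamped S xS i b) (1 : R).
Proof.
by rewrite -sum_ffun_family_prod big1_eq sumr_const.
Qed.

Lemma sum_clamped_expR_fRBM (m : nat) (J : 'M[R]_(n, m)) (h : 'I_n -> R)
    (g : 'I_m -> R) I S xI xS :
  \sum_(x : {ffun 'I_n -> bool} | [forall i in S, x i == xS i])
     ((if [forall i in I, x i == xI i] then 1 else 0) * expR (fRBM J h g x))
  = \sum_(q : {ffun 'I_m -> bool}) expR (\sum_j g j * spin (q j))
      * \prod_i \sum_(b | clamped S xS i b && clamped I xI i b)
                   expR (spin b * field_i J h q i).
Proof.
have clampedSI (x : {ffun 'I_n -> bool}) :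
    [forall i in S, x i == xS i] && [forall i in I, x i == xI i]
    = [forall i, clamped S xS i (x i) && clamped I xI i (x i)].
  apply/andP/forallP => [[/forallP xSP /forallP xIP] i | xP].
    by rewrite /clamped xSP xIP.
  by split; apply/forallP => i; case/andP: (xP i).
have -> : \sum_(x : {ffun 'I_n -> bool} | [forall i in S, x i == xS i])
     ((if [forall i in I, x i == xI i] then 1 else 0) * expR (fRBM J h g x))
  = \sum_(x : {ffun 'I_n -> bool}
           | [forall i, clamped S xS i (x i) && clamped I xI i (x i)])
     expR (fRBM J h g x).
  rewrite -(eq_bigl _ _ clampedSI) big_mkcondr; apply: eq_bigr => x _.
  by case: ifP; rewrite ?mul1r ?mul0r.
under eq_bigr do rewrite expR_fRBM.
rewrite exchange_big /=; apply: eq_bigr => q _.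
by rewrite -mulr_sumr -sum_ffun_family_prod.
Qed.

Lemma clamped_coordinate_ratio I S xI xS (i : 'I_n) (t : R) :
  [disjoint I & S] ->
  (\sum_(b | clamped S xS i b && clamped I xI i b) expR (spin b * t))
    / \sum_(b | clamped S xS i b) 1
  = (if i \in S then expR (spin (xS i) * t) else coshR t)
    * (if i \in I then sigma (2 * spin (xI i) * t) else 1).
Proof.
move=> disjIS; rewrite /clamped big_mkcond [in X in _ / X]big_mkcond !big_bool.
case iS: (i \in S) => /=.
  rewrite (disjointFl disjIS iS) /=.
  by case: (xS i); rewrite /= ?addr0 ?add0r divr1 mulr1.
case: (i \in I) => /=; last by rewrite /spin mul1r mulN1r mulr1.
rewrite coshR_sigma_spin.
by case: (xI i); rewrite /spin ?addr0 ?add0r.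
Qed.

End Clamping.

Theorem lemma5 (R : realType) (n m : nat) (J : 'M[R]_(n, m)) (h : 'I_n -> R)
  (g : 'I_m -> R) (I S : {set 'I_n}) (xI xS : {ffun 'I_n -> bool}) :
  [disjoint I & S] ->
  cond_exp_unif (fun X : {ffun 'I_n -> bool} => [forall i in S, X i == xS i])
    (fun X => (if [forall i in I, X i == xI i] then 1 else 0)
              * expR (fRBM J h g X))
  = \sum_(q : {ffun 'I_m -> bool})
      (expR (\sum_(j < m) g j * spin (q j))
       * (\prod_(i in S) expR (spin (xS i) * field_i J h q i))
       * (\prod_(i in ~: S) coshR (field_i J h q i))
       * (\prod_(i in I) sigma (2 * spin (xI i) * field_i J h q i))).
Proof.
move=> disjIS.
rewrite /cond_exp_unif sum_clamped_expR_fRBM card_clamped mulr_suml.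
apply: eq_bigr => q _.
rewrite -mulrA -prodf_div -2![in RHS](mulrA (expR _)).
rewrite prod_setC_if [\prod_(i in I) _]big_mkcond -big_split /=.
congr (_ * _); apply: eq_bigr => i _.
exact: clamped_coordinate_ratio.
Qed.
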